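(* Let $\Bbbk$ be a field, $S=\Bbbk[x,y,z]$, $\mathfrak m=(x,y,z)$, and let $I\subseteq S$ be a monomial ideal generated in degree $d$. Then $I$ has a bad configuration in $\Delta(d)$ if and only if the socle $0:_{S/I}\mathfrak m$ of $S/I$ contains (the image of) a monomial of degree at least $d$.
   Context: For a monomial $f\in S$, its $d$-shadow is the set of all monomials of degree $d$ dividing $f$. Let $\mathcal G(I)$ denote the minimal monomial generating set of $I$. $I$ (generated in degree $d$) is said to have a bad configuration in $\Delta(d)$ if there exists a nonempty set $M$ of degree-$d$ monomials not belonging to $I$ such that (i) $M$ is the $d$-shadow of some monomial $f\in S$, and (ii) each of the $d$-shadows of $fx$, $fy$ and $fz$ has nonempty intersection with $\mathcal G(I)$. Here $\Delta(d)$ denotes the dual graph of $\mathfrak m^d$ (vertices: degree-$d$ monomials). *)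

From mathcomp Require Import all_boot all_order all_algebra.
From mathcomp Require Import mpoly.
Set Implicit Arguments. Unset Strict Implicit. Unset Printing Implicit Defensive.
Import GRing.Theory.
Local Open Scope ring_scope.

(* Monomials of S = k[x,y,z] are exponent vectors m : 'X_{1..3};
   the variables x, y, z are 'X_0, 'X_1, 'X_2 (monomials mnm1 0, mnm1 1, mnm1 2). *)

Definition mono_ideal (k : fieldType) (G : seq 'X_{1..3}) (p : {mpoly k[3]}) : Prop :=
  exists hs : seq {mpoly k[3]},
    p = \sum_(i < size G) hs`_i * 'X_[nth (@mnm0 3) G i].

(* The homogeneous maximal ideal m = (x,y,z): polynomials with zero constant term. *)
Arguments mono_ideal : clear implicits.

Definition max_ideal (k : fieldType) (p : {mpoly k[3]}) : Prop := p@_(@mnm0 3) = 0.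

Definition in_socle (k : fieldType) (I : {mpoly k[3]} -> Prop) (f : {mpoly k[3]}) : Prop :=
  forall g, max_ideal g -> I (g * f).

Definition mdvd (u v : 'X_{1..3}) : bool := lem u v.

Definition min_gens (k : fieldType) (I : {mpoly k[3]} -> Prop) (u : 'X_{1..3}) : Prop :=
  I 'X_[u] /\ forall v : 'X_{1..3}, mdvd v u -> v <> u -> ~ I 'X_[v].

Definition shadow (d : nat) (f m : 'X_{1..3}) : Prop := mdeg m = d /\ mdvd m f.

Definition bad_configuration (k : fieldType) (I : {mpoly k[3]} -> Prop) (d : nat) : Prop :=
  exists M : 'X_{1..3} -> Prop,
    (exists m, M m) /\
    (forall m, M m -> mdeg m = d /\ ~ I 'X_[m]) /\
    exists f : 'X_{1..3},
      (forall m, M m <-> shadow d f m) /\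
      (forall i : 'I_3, exists g, shadow d (mnm_add f (mnm1 i)) g /\ min_gens I g).

(* For an ideal I generated by monomials of one degree d, a monomial lies in I
   exactly when its d-shadow meets G(I), and the minimal generators are the
   given ones.  Hence the three conditions of a bad configuration with apex f
   say: the d-shadow of f is nonempty (deg f >= d), avoids I (f is not in I),
   and fx, fy, fz lie in I, i.e. f is a socle monomial of S/I. *)
From mathcomp Require Import all_boot all_order all_algebra.
From mathcomp Require Import mpoly.
Set Implicit Arguments. Unset Strict Implicit.
Import GRing.Theory.
Local Open Scope ring_scope.

Section Monomials.
Variable n : nat.
Implicit Types m u v : 'X_{1..n}.

Lemma lepm_mdeg u v : (u <= v)%MM -> (mdeg u <= mdeg v)%N.
Proof. by move=> /submK uv; rewrite -uv mdegD leq_addl. Qed.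

Lemma lepm_mdeg_eq u v : (u <= v)%MM -> mdeg u = mdeg v -> u = v.
Proof.
move=> /submK uv; rewrite -{1}uv mdegD -{1}[mdeg u]add0n => /addIn/esym/eqP.
by rewrite mdeg_eq0 => /eqP vu0; rewrite -uv vu0 add0m.
Qed.

Lemma mnm1_lepm m : m != 0%MM -> exists i, (U_(i) <= m)%MM.
Proof.
move=> m_neq0; have [i m_i | m0] := pickP (fun i => m i != 0%N); last first.
  by case/eqP: m_neq0; apply/mnmP => i; rewrite mnm0E; apply/eqP/negbFE/m0.
exists i; apply/mnm_lepP => j; rewrite mnm1E.
by case: eqP => [<-|_]; rewrite ?lt0n.
Qed.

Lemma exists_lepm_mdeg d u :
  (d <= mdeg u)%N -> exists2 m, mdeg m = d & (m <= u)%MM.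
Proof.
elim: d => [|d IH] d_u.
  by exists 0%MM; [rewrite mdeg0 | apply/mnm_lepP => i; rewrite mnm0E].
have [m deg_m m_u] := IH (ltnW d_u).
have [i m_i | m_ge] := pickP (fun i => m i < u i)%N.
  exists (m + U_(i))%MM; first by rewrite mdegD mdeg1 deg_m addn1.
  apply/mnm_lepP => j; rewrite mnmDE mnm1E.
  by case: eqP => [<-|_]; rewrite ?addn1 ?addn0 //; move/mnm_lepP: m_u.
suff m_eq_u : m = u by move: d_u; rewrite -m_eq_u deg_m ltnn.
apply/mnmP => j; apply/eqP; rewrite eqn_leq (mnm_lepP m_u) /=.
by rewrite leqNgt m_ge.
Qed.

Lemma mcoeffMX_eq0 (R : nzRingType) (p : {mpoly R[n]}) g m :
  ~~ (g <= m)%MM -> (p * 'X_[g])@_m = 0.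
Proof.
move=> g_m; apply/eqP; rewrite -[_ == 0]negbK -mcoeff_msupp.
rewrite (perm_mem (msuppMX p g)).
by apply: contra g_m => /mapP [m' _ ->]; rewrite lem_addr.
Qed.

End Monomials.

Lemma exists_shadow d f : (exists m, shadow d f m) <-> (d <= mdeg f)%N.
Proof.
split=> [[m [<- /lepm_mdeg //]] | /exists_lepm_mdeg [m deg_m m_f]].
by exists m.
Qed.

Section Socle.
Variables (k : fieldType) (I : {mpoly k[3]} -> Prop).
Hypotheses (I0 : I 0) (ID : forall p q, I p -> I q -> I (p + q))
  (IMl : forall q p, I p -> I (q * p)).

Lemma in_socleX u : in_socle I 'X_[u] <-> forall i : 'I_3, I 'X_[u + U_(i)].
Proof.
split=> [u_soc i | uU_I g g0].
  rewrite addmC mpolyXD; apply: u_soc; rewrite /max_ideal mcoeffX.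
  by case: eqP => // U0; move: (mdeg1 i); rewrite U0 mdeg0.
rewrite (mpolyE g) big_distrl big_seq /=.
apply: (big_ind I) => // m; rewrite mcoeff_msupp => gm_neq0.
have [i U_m] : exists i, (U_(i) <= m)%MM.
  by apply: mnm1_lepm; apply: contraNneq gm_neq0 => ->; apply/eqP.
have -> : g@_m *: 'X_[m] * 'X_[u] = (g@_m *: 'X_[m - U_(i)]) * 'X_[u + U_(i)].
  by rewrite -!scalerAl -!mpolyXD [(u + _)%MM]addmC addmA submK.
exact: IMl.
Qed.

End Socle.

Section MonomialIdeal.
Variables (k : fieldType) (G : seq 'X_{1..3}).
Local Notation I := (mono_ideal k G).

Lemma mono_ideal0 : I 0.
Proof. by exists [::]; rewrite big1 // => i _; rewrite nth_nil mul0r. Qed.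

Lemma mono_idealD p q : I p -> I q -> I (p + q).
Proof.
move=> [hp ->] [hq ->]; exists (mkseq (fun i => hp`_i + hq`_i) (size G)).
by rewrite -big_split; apply: eq_bigr => i _; rewrite nth_mkseq // mulrDl.
Qed.

Lemma mono_idealMl q p : I p -> I (q * p).
Proof.
move=> [hp ->]; exists (mkseq (fun i => q * hp`_i) (size G)).
by rewrite big_distrr /=; apply: eq_bigr => i _; rewrite nth_mkseq // mulrA.
Qed.

Lemma mono_ideal_gen g : g \in G -> I 'X_[g].
Proof.
rewrite -index_mem => g_idx.
exists (mkseq (fun i => (i == index g G)%:R : {mpoly k[3]}) (size G)).
rewrite (bigD1 (Ordinal g_idx)) //= big1 ?addr0 => [|i /negbTE i_neq].
  by rewrite (nth_mkseq _ _ g_idx) eqxx mul1r nth_index // -index_mem.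
move: i_neq; rewrite -val_eqE /= (nth_mkseq _ _ (ltn_ord i)) => ->.
by rewrite mul0r.
Qed.

Lemma mcoeff_mono_ideal {p m} :
  I p -> (forall g, g \in G -> ~~ mdvd g m) -> p@_m = 0.
Proof.
move=> [hp ->] m_free; rewrite raddf_sum big1 // => i _.
by apply/mcoeffMX_eq0/m_free/mem_nth.
Qed.

Lemma mono_idealX m : I 'X_[m] <-> exists2 g, g \in G & mdvd g m.
Proof.
split=> [m_I | [g g_G g_m]]; last first.
  by rewrite -(submK g_m) mpolyXD; apply/mono_idealMl/mono_ideal_gen.
apply/hasP/negPn/negP => /hasPn m_free.
have := mcoeff_mono_ideal m_I m_free.
by rewrite mcoeffX eqxx => /eqP; rewrite oner_eq0.
Qed.

Lemma min_gens_mem g : min_gens I g -> g \in G.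
Proof.
case=> /mono_idealX [h h_G h_g] g_min.
have [<- // | /eqP h_neq] := eqVneq h g.
by case: (g_min h h_g h_neq); apply: mono_ideal_gen.
Qed.

End MonomialIdeal.

Section Equigenerated.
Variables (k : fieldType) (d : nat) (G : seq 'X_{1..3}).
Hypothesis deg_G : forall g, g \in G -> mdeg g = d.
Local Notation I := (mono_ideal k G).

Lemma min_gensE g : min_gens I g <-> g \in G.
Proof.
split=> [|g_G]; first exact: min_gens_mem.
split=> [|v v_g v_neq /mono_idealX [h h_G h_v]]; first exact: mono_ideal_gen.
apply: v_neq (lepm_mdeg_eq v_g _); apply/eqP.
by rewrite eqn_leq (lepm_mdeg v_g) (deg_G g_G) -(deg_G h_G) lepm_mdeg.
Qed.

Lemma shadow_min_gensP f : (exists g, shadow d f g /\ min_gens I g) <-> I 'X_[f].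
Proof.
split=> [[g [[_ g_f] /min_gensE g_G]] | /mono_idealX [g g_G g_f]].
  by apply/mono_idealX; exists g.
by exists g; rewrite min_gensE; split=> //; split=> //; apply: deg_G.
Qed.

Lemma shadow_notin_idealP f : (forall m, shadow d f m -> ~ I 'X_[m]) <-> ~ I 'X_[f].
Proof.
split=> [f_free /mono_idealX [g g_G g_f] | f_notin m [_ m_f]].
  by apply: (f_free g); [split=> //; apply: deg_G | apply: mono_ideal_gen].
move=> /mono_idealX [g g_G g_m].
by apply: f_notin; apply/mono_idealX; exists g => //; apply: lepm_trans g_m m_f.
Qed.

End Equigenerated.

Theorem mainTheorem3 (k : fieldType) (d : nat) (G : seq 'X_{1..3}) :
  all (fun g => mdeg g == d) G ->
  (bad_configuration (mono_ideal k G) d <->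
   exists u : 'X_{1..3},
     (d <= mdeg u)%N /\ ~ mono_ideal k G 'X_[u] /\ in_socle (mono_ideal k G) 'X_[u]).
Proof.
move=> /allP deg_G; have {}deg_G g : g \in G -> mdeg g = d by move/deg_G/eqP.
have socleP u := in_socleX (@mono_ideal0 k G) (@mono_idealD k G) (@mono_idealMl k G) u.
split=> [[M [[m0 M_m0] [M_free [f [M_shadow fU_gen]]]]] | [u [d_u [u_notin u_soc]]]].
  exists f; split; [|split].
  - by apply/exists_shadow; exists m0; apply/M_shadow.
  - by apply/(shadow_notin_idealP k deg_G) => m /M_shadow /M_free [].
  - by apply/socleP => i; apply/(shadow_min_gensP k deg_G).
exists (shadow d u); split; [exact/exists_shadow | split].
- move=> m u_m; split; first by case: u_m.
  by move/(shadow_notin_idealP k deg_G): u_notin; apply.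
- by exists u; split=> // i; apply/(shadow_min_gensP k deg_G); move/socleP: u_soc.
Qed.
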